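(* For $k\in\mathbb{N}$ let $a_k=\dfrac{|B_{2k}|\,(2k-2)\,4^{k}}{(2k)!}$, where $B_{2k}$ denotes the Bernoulli number. For every $x\in(0,\pi/2)$ and every integer $m\ge 2$, $$2+\sum_{k=2}^{m-1}a_k x^{2k}+\Big(\frac{2x}{\pi}\Big)^{2m}\Big(\frac{\pi^2}{4}-2-\sum_{k=2}^{m-1}a_k\Big(\frac{\pi}{2}\Big)^{2k}\Big)>\Big(\frac{x}{\sin x}\Big)^{2}+\frac{x}{\tan x}>2+\sum_{k=2}^{m}a_k x^{2k},$$ where empty sums equal $0$.
   Context: $B_j$ are the Bernoulli numbers ($B_2=1/6$, $B_4=-1/30$, $B_6=1/42,\dots$). *)

From Stdlib Require Import Reals List Lra Factorial.
Import ListNotations.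
Open Scope R_scope.

(* Bernoulli numbers, convention B_0 = 1 and
   sum_{j=0}^{n} C(n+1,j) B_j = 0 for n >= 1 (so B_1 = -1/2, B_2 = 1/6, ...).
   blist n = [B_0; ...; B_n]. *)
Fixpoint blist (n : nat) : list R :=
  match n with
  | O => [1]
  | S n' =>
      let l := blist n' in
      l ++ [ - / INR (S n' + 1) *
             fold_right Rplus 0
               (map (fun j => C (S n' + 1) j * nth j l 0) (seq 0 (S n'))) ]
  end.

Definition bernoulli (n : nat) : R := nth n (blist n) 0.

Definition a_coef (k : nat) : R :=
  Rabs (bernoulli (2 * k)) * INR (2 * k - 2) * 4 ^ k / INR (fact (2 * k)).

(* sum_{k=2}^{n} f k  (empty, = 0, when n < 2) *)
Definition sum_from2 (n : nat) (f : nat -> R) : R :=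
  fold_right Rplus 0 (map f (seq 2 (n - 1))).

Lemma bernoulli_sanity :
  bernoulli 2 = 1/6 /\ bernoulli 4 = -1/30.
Proof.
  unfold bernoulli; simpl; unfold C; simpl.
  split; field_simplify; lra.
Qed.

(* Let Y(x) = 1 - x cot x.  Then x/tan x = 1 - Y and (x/sin x)^2 = x^2 + (1 - Y)^2,
   and Y solves the Riccati equation x Y' = x^2 + Y^2 - Y, so that
   (x/sin x)^2 + x/tan x - 2 = x Y' - 2 Y = sum_n (n - 2) y_n x^n, where y_n are the Taylor
   coefficients of Y; a_k is the coefficient of x^(2k).  These coefficients are nonnegative and
   positive at every even index >= 4: truncating the series gives the lower bound, and comparing
   the tail at x with (2x/pi)^(2m) times the tail at pi/2, where the function equals pi^2/4,
   gives the upper bound.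

   The coefficients are computed without complex numbers.  The recursion defining B_n says that
   G(t) = sum B_n t^n / n! satisfies G(t) (e^t - 1)/t = 1, hence t G' = G - t G - G^2.  Read on
   coefficients, this Riccati equation kills the odd Bernoulli numbers beyond B_1 and, after the
   substitution t = 2ix, becomes the recursion (n + 1) y_n = [n = 2] + sum_j y_j y_(n-j) for
   y_n = -(-4)^(n/2) B_n / n!.  It yields 0 <= y_n <= (3/5)^n, so the series converges beyond
   pi/2, and a Gronwall argument identifies its sum with 1 - x cot x. *)

From Stdlib Require Import Reals Lra Lia List Arith.
From Coquelicot Require Import Coquelicot.
Open Scope R_scope.

Lemma fold_right_Rplus_init (l : list R) (a : R) :
  fold_right Rplus a l = a + fold_right Rplus 0 l.
Proof. induction l as [|y l IH]; simpl; [|rewrite IH]; ring. Qed.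

Lemma fold_right_Rplus_map_seq (f : nat -> R) (s n : nat) :
  fold_right Rplus 0 (map f (seq s (S n))) = sum_f_R0 (fun j => f (s + j)%nat) n.
Proof.
  induction n as [|n IH].
  - simpl. rewrite Nat.add_0_r. ring.
  - rewrite seq_S, map_app, fold_right_app, fold_right_Rplus_init, IH. simpl. ring.
Qed.

Lemma sum_from2_eq_sum (f : nat -> R) (n : nat) :
  (1 <= n)%nat -> f 0%nat = 0 -> f 1%nat = 0 -> sum_from2 n f = sum_f_R0 f n.
Proof.
  intros Hn H0 H1. unfold sum_from2.
  change (sum_f_R0 f n) with (sum_f_R0 (fun j => f (0 + j)%nat) n).
  rewrite <- fold_right_Rplus_map_seq.
  replace (S n) with (2 + (n - 1))%nat by lia.
  rewrite seq_app. simpl. rewrite H0, H1. ring.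
Qed.

Lemma sum_f_R0_even (g : nat -> R) (n : nat) :
  (forall k, g (2 * k + 1)%nat = 0) ->
  sum_f_R0 (fun k => g (2 * k)%nat) n = sum_f_R0 g (2 * n + 1).
Proof.
  intros Hodd. induction n as [|n IH].
  - change (g 0%nat = g 0%nat + g (2 * 0 + 1)%nat). rewrite Hodd. ring.
  - replace (2 * S n + 1)%nat with (S (S (2 * n + 1))) by lia.
    rewrite !tech5, IH.
    replace (S (2 * n + 1)) with (2 * S n)%nat by lia.
    replace (S (2 * S n)) with (2 * S n + 1)%nat by lia. rewrite Hodd. ring.
Qed.

Definition PS_delta (k n : nat) : R := if Nat.eqb n k then 1 else 0.

Lemma PS_delta_neq (k n : nat) : n <> k -> PS_delta k n = 0.
Proof. intros Hnk. unfold PS_delta. now destruct (Nat.eqb_spec n k). Qed.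

Lemma sum_f_R0_delta (k n : nat) (f : nat -> R) :
  (k <= n)%nat -> sum_f_R0 (fun j => PS_delta k j * f j) n = f k.
Proof.
  intros Hk. induction n as [|n IH]; simpl.
  - replace k with 0%nat by lia. unfold PS_delta; simpl. ring.
  - unfold PS_delta at 2. destruct (Nat.eqb_spec (S n) k) as [<-|Hne].
    + rewrite (sum_eq _ (fun _ => 0)), sum_cte; [ring|].
      intros j Hj. rewrite PS_delta_neq by lia. ring.
    + rewrite IH by lia. ring.
Qed.

Lemma sum_f_R0_ge_term (f : nat -> R) (n k : nat) :
  (forall j, (j <= n)%nat -> 0 <= f j) -> (k <= n)%nat -> f k <= sum_f_R0 f n.
Proof.
  intros Hf Hk. induction n as [|n IH]; simpl.
  - replace k with 0%nat by lia. lra.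
  - assert (0 <= f (S n)) by (apply Hf; lia).
    destruct (Nat.eq_dec k (S n)) as [->|Hne].
    + assert (0 <= sum_f_R0 f n).
      { apply Rle_trans with (sum_f_R0 (fun _ => 0) n); [rewrite sum_cte; lra|].
        apply sum_Rle. intros; apply Hf; lia. }
      lra.
    + assert (f k <= sum_f_R0 f n) by (apply IH; [intros; apply Hf|]; lia). lra.
Qed.

Lemma CV_radius_ge_geom (a : nat -> R) (M K : R) :
  0 < K -> (forall n, Rabs (a n) <= M * K ^ n) -> Rbar_le (/ K) (CV_radius a).
Proof.
  intros HK Hb. apply CV_radius_bounded. exists M. intros n.
  rewrite Rabs_mult, <- RPow_abs, (Rabs_right (/ K)), pow_inv
    by (left; apply Rinv_0_lt_compat; lra).
  apply Rle_trans with (M * K ^ n * / K ^ n).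
  - apply Rmult_le_compat_r; [left; apply Rinv_0_lt_compat, pow_lt; lra | apply Hb].
  - right. field. apply pow_nonzero. lra.
Qed.

Lemma Rabs_lt_CV_radius (a : nat -> R) (r x : R) :
  Rbar_le r (CV_radius a) -> Rabs x < r -> Rbar_lt (Rabs x) (CV_radius a).
Proof. intros Hr Hx. now apply (Rbar_lt_le_trans _ (Finite r)). Qed.

Lemma is_series_delta (k : nat) (f : nat -> R) :
  is_series (fun n => PS_delta k n * f n) (f k).
Proof.
  apply is_series_Reals. intros eps Heps. exists k. intros n Hn.
  rewrite sum_f_R0_delta by lia. unfold R_dist. rewrite Rminus_diag, Rabs_R0. lra.
Qed.

Lemma is_pseries_delta (k : nat) (x : R) : is_pseries (PS_delta k) x (x ^ k).
Proof.
  unfold is_pseries. eapply is_series_ext; [|apply (is_series_delta k (pow x))].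
  intros n. rewrite pow_n_pow. apply Rmult_comm.
Qed.

Lemma PSeries_Rplus (a b : nat -> R) (x : R) :
  ex_pseries a x -> ex_pseries b x ->
  PSeries (fun n => a n + b n) x = PSeries a x + PSeries b x.
Proof. intros. rewrite <- PSeries_plus by assumption. apply PSeries_ext. reflexivity. Qed.

Lemma PSeries_Rminus (a b : nat -> R) (x : R) :
  ex_pseries a x -> ex_pseries b x ->
  PSeries (fun n => a n - b n) x = PSeries a x - PSeries b x.
Proof. intros. rewrite <- PSeries_minus by assumption. apply PSeries_ext. reflexivity. Qed.

Lemma ex_pseries_Rplus (a b : nat -> R) (x : R) :
  ex_pseries a x -> ex_pseries b x -> ex_pseries (fun n => a n + b n) x.
Proof.
  intros. apply (ex_pseries_ext (PS_plus a b)); [reflexivity | now apply ex_pseries_plus].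
Qed.

Lemma ex_pseries_Rminus (a b : nat -> R) (x : R) :
  ex_pseries a x -> ex_pseries b x -> ex_pseries (fun n => a n - b n) x.
Proof.
  intros. apply (ex_pseries_ext (PS_minus a b)); [reflexivity | now apply ex_pseries_minus].
Qed.

Lemma PS_incr_1_derive (a : nat -> R) (n : nat) :
  PS_incr_1 (PS_derive a) n = INR n * a n.
Proof. destruct n as [|n]; [symmetry; apply Rmult_0_l | reflexivity]. Qed.

Lemma CV_radius_Euler (a : nat -> R) : CV_radius (fun n => INR n * a n) = CV_radius a.
Proof.
  rewrite <- (CV_radius_derive a), <- (CV_radius_incr_1 (PS_derive a)).
  apply CV_radius_ext. intros n. symmetry. apply PS_incr_1_derive.
Qed.

Lemma Euler_PSeries (a : nat -> R) (x : R) :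
  Rbar_lt (Rabs x) (CV_radius a) ->
  x * Derive (PSeries a) x = PSeries (fun n => INR n * a n) x.
Proof.
  intros Hx. rewrite Derive_PSeries, <- PSeries_incr_1 by exact Hx.
  apply PSeries_ext, PS_incr_1_derive.
Qed.

Lemma S_INR_le_pow2 (n : nat) : INR (S n) <= 2 ^ n.
Proof.
  induction n as [|n IH]; [simpl; lra|].
  rewrite S_INR. change (2 ^ S n) with (2 * 2 ^ n).
  assert (1 <= 2 ^ n) by (apply pow_R1_Rle; lra). lra.
Qed.

Lemma Rabs_PS_mult_le (a b : nat -> R) (K : R) (n : nat) :
  0 <= K -> (forall n, Rabs (a n) <= K ^ n) -> (forall n, Rabs (b n) <= K ^ n) ->
  Rabs (PS_mult a b n) <= (2 * K) ^ n.
Proof.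
  intros HK Ha Hb. unfold PS_mult. eapply Rle_trans; [apply sum_f_R0_triangle|].
  apply Rle_trans with (sum_f_R0 (fun _ => K ^ n) n).
  - apply sum_Rle. intros k Hk. rewrite Rabs_mult.
    replace (K ^ n) with (K ^ k * K ^ (n - k)) by (rewrite <- pow_add; f_equal; lia).
    apply Rmult_le_compat; auto using Rabs_pos.
  - rewrite sum_cte, Rpow_mult_distr, Rmult_comm.
    apply Rmult_le_compat_r; [apply pow_le; lra | apply S_INR_le_pow2].
Qed.

Lemma is_pseries_scal_delta (k : nat) (v x : R) :
  is_pseries (fun n => v * PS_delta k n) x (v * x ^ k).
Proof.
  apply (is_pseries_ext (PS_scal v (PS_delta k))); [reflexivity|].
  exact (is_pseries_scal v _ x _ (Rmult_comm _ _) (is_pseries_delta k x)).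
Qed.

(** * The Bernoulli generating function *)

Lemma blist_length (n : nat) : length (blist n) = S n.
Proof. induction n as [|n IH]; simpl; [|rewrite length_app, IH; simpl]; lia. Qed.

Lemma nth_blist (n j : nat) : (j <= n)%nat -> nth j (blist n) 0 = bernoulli j.
Proof.
  induction n as [|n IH]; intros Hj.
  - replace j with 0%nat by lia. reflexivity.
  - destruct (Nat.eq_dec j (S n)) as [->|Hne]; [reflexivity|].
    simpl blist. rewrite app_nth1 by (rewrite blist_length; lia). apply IH. lia.
Qed.

Lemma bernoulli_S (n : nat) :
  bernoulli (S n) =
  - / INR (S n + 1) * sum_f_R0 (fun j => Binomial.C (S n + 1) j * bernoulli j) n.
Proof.
  unfold bernoulli at 1. cbn [blist].
  rewrite app_nth2, blist_length, Nat.sub_diag by (rewrite blist_length; lia).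
  cbn [nth].
  rewrite (fold_right_Rplus_map_seq _ 0 n). f_equal. apply sum_eq. intros j Hj.
  rewrite nth_blist by lia. reflexivity.
Qed.

(* Taylor coefficients of t / (e^t - 1) and of (e^t - 1) / t. *)
Definition bern_coef (n : nat) : R := bernoulli n / INR (fact n).
Definition expm1_coef (n : nat) : R := / INR (fact (S n)).

Lemma bern_coef_conv_expm1 (n : nat) : PS_mult bern_coef expm1_coef n = PS_delta 0 n.
Proof.
  destruct n as [|n].
  - unfold PS_mult, PS_delta, bern_coef, expm1_coef, bernoulli. simpl. field.
  - unfold PS_mult, PS_delta. rewrite tech5, Nat.sub_diag. simpl Nat.eqb.
    assert (Hf := INR_fact_lt_0 (S n)).
    assert (Hn : 0 < INR (S n + 1)) by (apply lt_0_INR; lia).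
    assert (Hfact : INR (fact (S n + 1)) = INR (S n + 1) * INR (fact (S n))).
    { rewrite Nat.add_1_r, fact_simpl, mult_INR. reflexivity. }
    assert (Hsum : sum_f_R0 (fun k => bern_coef k * expm1_coef (S n - k)) n =
              / INR (fact (S n + 1)) *
              sum_f_R0 (fun j => Binomial.C (S n + 1) j * bernoulli j) n).
    { rewrite scal_sum. apply sum_eq. intros k Hk.
      unfold bern_coef, expm1_coef, Binomial.C.
      replace (S n + 1 - k)%nat with (S (S n - k)) by lia.
      assert (H1 := INR_fact_lt_0 k).
      assert (H2 := INR_fact_lt_0 (S (S n - k))).
      assert (H3 := INR_fact_lt_0 (S n + 1)). field. lra. }
    assert (Hrec : sum_f_R0 (fun j => Binomial.C (S n + 1) j * bernoulli j) n =
              - INR (S n + 1) * bernoulli (S n)).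
    { rewrite bernoulli_S. field. lra. }
    rewrite Hsum, Hrec, Hfact. unfold bern_coef, expm1_coef.
    simpl (fact 1). rewrite INR_1. field. lra.
Qed.

Lemma expm1_coef_le_half (n : nat) : (1 <= n)%nat -> 0 < expm1_coef n <= / 2.
Proof.
  intros Hn. unfold expm1_coef. split; [apply Rinv_0_lt_compat, INR_fact_lt_0|].
  apply Rinv_le_contravar; [lra|].
  destruct n as [|n]; [lia|].
  rewrite fact_simpl, mult_INR.
  assert (1 <= INR (fact (S n))) by (apply (le_INR 1), lt_O_fact).
  assert (2 <= INR (S (S n))) by (apply (le_INR 2); lia). nra.
Qed.

Lemma Rabs_bern_coef_le (n : nat) : Rabs (bern_coef n) <= 2 ^ n.
Proof.
  induction n as [[|n] IH] using lt_wf_ind.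
  - unfold bern_coef, bernoulli. simpl. rewrite Rabs_right; lra.
  - assert (Hconv := bern_coef_conv_expm1 (S n)).
    unfold PS_mult, PS_delta in Hconv. simpl Nat.eqb in Hconv.
    rewrite tech5, Nat.sub_diag in Hconv.
    replace (expm1_coef 0) with 1 in Hconv by (unfold expm1_coef; simpl; field).
    replace (bern_coef (S n)) with (- sum_f_R0 (fun k => bern_coef k * expm1_coef (S n - k)) n)
      by lra.
    rewrite Rabs_Ropp. eapply Rle_trans; [apply sum_f_R0_triangle|].
    apply Rle_trans with (sum_f_R0 (fun k => 2 ^ k * / 2) n).
    + apply sum_Rle. intros k Hk. rewrite Rabs_mult.
      destruct (expm1_coef_le_half (S n - k)) as [E1 E2]; [lia|].
      rewrite (Rabs_right (expm1_coef _)) by lra.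
      apply Rmult_le_compat; auto using Rabs_pos with real. apply IH. lia.
    + rewrite <- scal_sum, tech3 by lra. simpl. assert (0 < 2 ^ n) by (apply pow_lt; lra). lra.
Qed.

Lemma CV_radius_bern_coef : Rbar_le (/ 2) (CV_radius bern_coef).
Proof.
  apply (CV_radius_ge_geom _ 1); [lra|]. intros n. rewrite Rmult_1_l. apply Rabs_bern_coef_le.
Qed.

Lemma CV_radius_expm1_coef : Rbar_le 1 (CV_radius expm1_coef).
Proof.
  rewrite <- Rinv_1. apply (CV_radius_ge_geom _ 1); [lra|]. intros [|n].
  - unfold expm1_coef. simpl. rewrite Rinv_1, Rabs_R1. lra.
  - destruct (expm1_coef_le_half (S n)) as [H1 H2]; [lia|].
    rewrite Rabs_right, pow1 by lra. lra.
Qed.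

Lemma bern_mul_expm1 (t : R) :
  Rabs t < / 2 -> PSeries bern_coef t * PSeries expm1_coef t = 1.
Proof.
  intros Ht. rewrite <- PSeries_mult.
  - rewrite (PSeries_ext _ _ _ bern_coef_conv_expm1).
    apply (is_pseries_unique _ _ _ (is_pseries_delta 0 t)).
  - apply (Rabs_lt_CV_radius _ _ _ CV_radius_bern_coef Ht).
  - apply (Rabs_lt_CV_radius _ _ _ CV_radius_expm1_coef). lra.
Qed.

Lemma expm1_coef_Euler (n : nat) :
  INR n * expm1_coef n = PS_delta 0 n + PS_incr_1 expm1_coef n - expm1_coef n.
Proof.
  unfold PS_delta, PS_incr_1, expm1_coef.
  destruct n as [|n]; cbn -[INR fact Rinv]; change zero with 0.
  - simpl. field.
  - assert (H1 := INR_fact_lt_0 (S n)). assert (0 <= INR n) by apply pos_INR.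
    rewrite (fact_simpl (S n)), mult_INR, !S_INR.
    field. lra.
Qed.

Lemma expm1_Euler (t : R) :
  Rabs t < 1 ->
  t * Derive (PSeries expm1_coef) t = 1 + t * PSeries expm1_coef t - PSeries expm1_coef t.
Proof.
  intros Ht. assert (Hr := Rabs_lt_CV_radius _ _ _ CV_radius_expm1_coef Ht).
  assert (Hd := is_pseries_delta 0 t).
  assert (Hd' : ex_pseries (PS_delta 0) t) by (eexists; exact Hd).
  assert (He : ex_pseries expm1_coef t) by now apply CV_radius_inside.
  assert (Hi : ex_pseries (PS_incr_1 expm1_coef) t).
  { apply CV_radius_inside. now rewrite CV_radius_incr_1. }
  rewrite Euler_PSeries, (PSeries_ext _ _ _ expm1_coef_Euler) by exact Hr.
  rewrite PSeries_Rminus, PSeries_Rplus, PSeries_incr_1, (is_pseries_unique _ _ _ Hd)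
    by auto using ex_pseries_Rplus.
  simpl. ring.
Qed.

Lemma bern_riccati (t : R) :
  Rabs t < / 2 ->
  t * Derive (PSeries bern_coef) t =
  PSeries bern_coef t - t * PSeries bern_coef t - PSeries bern_coef t ^ 2.
Proof.
  intros Ht.
  assert (HG := Rabs_lt_CV_radius _ _ _ CV_radius_bern_coef Ht).
  assert (HE : Rbar_lt (Rabs t) (CV_radius expm1_coef))
    by (apply (Rabs_lt_CV_radius _ 1); [apply CV_radius_expm1_coef | lra]).
  set (G := PSeries bern_coef t). set (E := PSeries expm1_coef t).
  set (G' := Derive (PSeries bern_coef) t). set (E' := Derive (PSeries expm1_coef) t).
  (* Differentiate G E = 1 and eliminate E' with t E' = 1 + t E - E. *)
  assert (HGE : G * E = 1) by now apply bern_mul_expm1.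
  assert (HE' : t * E' = 1 + t * E - E) by (apply expm1_Euler; lra).
  assert (Hprod : G' * E + G * E' = 0).
  { assert (Hd : is_derive (fun s => PSeries bern_coef s * PSeries expm1_coef s) t
                   (G' * E + G * E')).
    { apply (is_derive_mult (PSeries bern_coef) (PSeries expm1_coef));
        [apply Derive_correct, ex_derive_PSeries; exact HG
        |apply Derive_correct, ex_derive_PSeries; exact HE
        |intros; apply Rmult_comm]. }
    rewrite <- (is_derive_unique _ _ _ Hd), <- (Derive_const 1 t).
    apply Derive_ext_loc. exists (mkposreal (/ 2 - Rabs t) ltac:(simpl; lra)).
    intros s Hs. apply bern_mul_expm1.
    assert (Rabs s <= Rabs t + Rabs (s - t)) by
      (replace s with (t + (s - t)) at 1 by ring; apply Rabs_triang).
    change (Rabs (s - t) < / 2 - Rabs t) in Hs. lra. }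
  transitivity (t * G' * (G * E)); [rewrite HGE; ring|].
  transitivity (t * G * (G' * E + G * E') - G * G * (t * E')); [ring|].
  rewrite Hprod, HE'. transitivity (G - t * G - G ^ 2 + (G - t * G) * (G * E - 1)); [ring|].
  rewrite HGE. ring.
Qed.

(* Taylor coefficients of (t/2) coth (t/2) = t / (e^t - 1) + t / 2. *)
Definition coth_coef (n : nat) : R := bern_coef n + / 2 * PS_delta 1 n.

Lemma coth_coef_0 : coth_coef 0 = 1.
Proof. unfold coth_coef, bern_coef, PS_delta, bernoulli. simpl. field. Qed.

Lemma coth_coef_1 : coth_coef 1 = 0.
Proof.
  unfold coth_coef, bern_coef, PS_delta. rewrite bernoulli_S.
  unfold Binomial.C, bernoulli. simpl. field.
Qed.

Lemma coth_coef_SS (n : nat) : coth_coef (S (S n)) = bern_coef (S (S n)).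
Proof. unfold coth_coef, PS_delta. simpl. ring. Qed.

Lemma Rabs_coth_coef_le (n : nat) : Rabs (coth_coef n) <= 2 ^ n.
Proof.
  destruct n as [|[|n]].
  - rewrite coth_coef_0, Rabs_R1. simpl. lra.
  - rewrite coth_coef_1, Rabs_R0. simpl. lra.
  - rewrite coth_coef_SS. apply Rabs_bern_coef_le.
Qed.

Lemma CV_radius_coth_coef : Rbar_le (/ 2) (CV_radius coth_coef).
Proof.
  apply (CV_radius_ge_geom _ 1); [lra|]. intros n. rewrite Rmult_1_l. apply Rabs_coth_coef_le.
Qed.

Lemma coth_riccati (t : R) :
  Rabs t < / 2 ->
  PSeries (fun n => INR n * coth_coef n) t =
  PSeries (fun n => coth_coef n - PS_mult coth_coef coth_coef n + / 4 * PS_delta 2 n) t.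
Proof.
  intros Ht.
  assert (Hb := Rabs_lt_CV_radius _ _ _ CV_radius_bern_coef Ht).
  assert (Hc := Rabs_lt_CV_radius _ _ _ CV_radius_coth_coef Ht).
  assert (Hb' : ex_pseries (fun n => INR n * bern_coef n) t).
  { apply CV_radius_inside. now rewrite CV_radius_Euler. }
  assert (Hd1 := is_pseries_scal_delta 1 (/ 2) t).
  assert (Hd2 := is_pseries_scal_delta 2 (/ 4) t).
  assert (Hcc : ex_pseries (PS_mult coth_coef coth_coef) t) by now apply ex_pseries_mult.
  assert (HcG : PSeries coth_coef t = PSeries bern_coef t + t / 2).
  { unfold coth_coef. rewrite PSeries_Rplus, (is_pseries_unique _ _ _ Hd1).
    - simpl. field.
    - now apply CV_radius_inside.
    - eexists; exact Hd1. }
  rewrite (PSeries_ext _ (fun n => INR n * bern_coef n + / 2 * PS_delta 1 n)).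
  2:{ intros [|[|n]]; unfold coth_coef, PS_delta; simpl; ring. }
  rewrite PSeries_Rplus, PSeries_Rplus, PSeries_Rminus, PSeries_mult, HcG,
    (is_pseries_unique _ _ _ Hd1), (is_pseries_unique _ _ _ Hd2), <- Euler_PSeries,
    bern_riccati; try (eexists; eassumption); auto using ex_pseries_Rminus, CV_radius_inside.
  simpl. field.
Qed.

Lemma coth_coef_riccati (n : nat) :
  INR n * coth_coef n = coth_coef n - PS_mult coth_coef coth_coef n + / 4 * PS_delta 2 n.
Proof.
  apply (PSeries_ext_recip (fun n => INR n * coth_coef n)
           (fun n => coth_coef n - PS_mult coth_coef coth_coef n + / 4 * PS_delta 2 n)).
  - rewrite CV_radius_Euler.
    apply (Rbar_lt_le_trans _ (/ 2)); [simpl; lra | apply CV_radius_coth_coef].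
  - apply (Rbar_lt_le_trans _ (/ 4)); [simpl; lra|].
    apply (CV_radius_ge_geom _ 3); [lra|]. intros m.
    assert (Hc := Rabs_coth_coef_le m).
    assert (Hcc := Rabs_PS_mult_le _ _ 2 m ltac:(lra) Rabs_coth_coef_le Rabs_coth_coef_le).
    assert (Hd : Rabs (/ 4 * PS_delta 2 m) <= 1).
    { unfold PS_delta. destruct (Nat.eqb m 2); rewrite Rabs_right; lra. }
    assert (2 ^ m <= 4 ^ m) by (apply pow_incr; lra).
    assert (1 <= 4 ^ m) by (apply pow_R1_Rle; lra).
    replace (2 * 2) with 4 in Hcc by ring.
    unfold Rminus. eapply Rle_trans; [apply Rabs_triang|].
    rewrite <- (Rabs_Ropp (PS_mult _ _ m)) in Hcc.
    assert (Rabs (coth_coef m + - PS_mult coth_coef coth_coef m) <= 2 * 4 ^ m)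
      by (eapply Rle_trans; [apply Rabs_triang | lra]).
    lra.
  - exists (mkposreal (/ 2) ltac:(lra)). intros t Ht. apply coth_riccati.
    change (Rabs (t - 0) < / 2) in Ht. now rewrite Rminus_0_r in Ht.
Qed.

Lemma coth_coef_odd (k : nat) : coth_coef (2 * k + 1) = 0.
Proof.
  induction k as [[|k] IH] using lt_wf_ind; [apply coth_coef_1|].
  set (N := (2 * S k + 1)%nat).
  (* At odd N every product c_j c_(N-j) with 0 < j < N has an odd index below N. *)
  assert (Hterm : forall j, (j <= N)%nat ->
            coth_coef j * coth_coef (N - j) =
            PS_delta 0 j * coth_coef N + PS_delta N j * coth_coef N).
  { intros j Hj. unfold PS_delta.
    destruct (Nat.eqb_spec j 0) as [->|Hj0].
    - rewrite coth_coef_0, Nat.sub_0_r. destruct (Nat.eqb_spec 0 N); [lia|ring].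
    - destruct (Nat.eqb_spec j N) as [->|HjN].
      + rewrite Nat.sub_diag, coth_coef_0. ring.
      + destruct (Nat.Even_or_Odd j) as [[a ->]|[a ->]].
        * replace (N - 2 * a)%nat with (2 * (S k - a) + 1)%nat by (unfold N in *; lia).
          rewrite (IH (S k - a)%nat) by lia. ring.
        * rewrite (IH a) by (unfold N in *; lia). ring. }
  assert (Hconv : PS_mult coth_coef coth_coef N = 2 * coth_coef N).
  { unfold PS_mult. rewrite (sum_eq _ _ _ Hterm), plus_sum, !sum_f_R0_delta by lia. ring. }
  assert (Hric := coth_coef_riccati N).
  rewrite Hconv, PS_delta_neq in Hric by (unfold N; lia).
  assert (0 <= INR N) by apply pos_INR.
  assert ((INR N + 1) * coth_coef N = 0) by lra.
  apply (Rmult_eq_reg_l (INR N + 1)); lra.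
Qed.

(** * The Taylor coefficients of 1 - x cot x *)

(* 1 - x cot x = 1 - (u/2) coth (u/2) at u = 2ix; the substitution multiplies the coefficient of
   an even power t^n by (-4)^(n/2), and the odd coefficients of coth_coef vanish. *)
Definition cot_coef (n : nat) : R := PS_delta 0 n - (-4) ^ Nat.div2 n * coth_coef n.

Lemma cot_coef_0 : cot_coef 0 = 0.
Proof. unfold cot_coef. rewrite coth_coef_0. unfold PS_delta. simpl. ring. Qed.

Lemma cot_coef_S (n : nat) :
  cot_coef (S n) = - (-4) ^ Nat.div2 (S n) * coth_coef (S n).
Proof. unfold cot_coef, PS_delta. simpl. ring. Qed.

Lemma cot_coef_odd (k : nat) : cot_coef (2 * k + 1) = 0.
Proof. rewrite Nat.add_1_r, cot_coef_S, <- Nat.add_1_r, coth_coef_odd. ring. Qed.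

Lemma cot_coef_even (k : nat) :
  (1 <= k)%nat -> cot_coef (2 * k) = - (-4) ^ k * bern_coef (2 * k).
Proof.
  intros Hk. destruct k as [|k]; [lia|].
  replace (2 * S k)%nat with (S (S (2 * k))) by lia.
  rewrite cot_coef_S, coth_coef_SS. replace (S (S (2 * k))) with (2 * S k)%nat by lia.
  rewrite Nat.div2_double. reflexivity.
Qed.

Lemma cot_coef_2 : cot_coef 2 = / 3.
Proof.
  change (cot_coef 2) with (cot_coef (2 * 1)).
  rewrite cot_coef_even by lia. unfold bern_coef.
  change (2 * 1)%nat with 2%nat. rewrite (proj1 bernoulli_sanity). simpl. field.
Qed.

Lemma cot_coef_mul (n j : nat) :
  (1 <= n)%nat -> (j <= n)%nat ->
  cot_coef j * cot_coef (n - j) =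
  (-4) ^ Nat.div2 n * (coth_coef j * coth_coef (n - j))
  + (PS_delta 0 j + PS_delta n j) * cot_coef n.
Proof.
  intros Hn Hj. destruct n as [|n]; [lia|]. rewrite (cot_coef_S n).
  unfold PS_delta. destruct (Nat.eqb_spec j 0) as [->|Hj0].
  - rewrite cot_coef_0, coth_coef_0, Nat.sub_0_r. simpl. ring.
  - destruct (Nat.eqb_spec j (S n)) as [->|HjN].
    + rewrite Nat.sub_diag, cot_coef_0, coth_coef_0. ring.
    + destruct (Nat.Even_or_Odd j) as [[a ->]|[a ->]].
      * destruct (Nat.Even_or_Odd (S n - 2 * a)) as [[b Hb]|[b Hb]].
        -- rewrite Hb. destruct a as [|a]; [lia|]. destruct b as [|b]; [lia|].
           replace (2 * S a)%nat with (S (2 * a + 1)) by lia.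
           replace (2 * S b)%nat with (S (2 * b + 1)) by lia.
           rewrite !cot_coef_S.
           replace (S n) with (2 * (S a + S b))%nat by lia.
           replace (S (2 * a + 1)) with (2 * S a)%nat by lia.
           replace (S (2 * b + 1)) with (2 * S b)%nat by lia.
           rewrite !Nat.div2_double, pow_add. ring.
        -- rewrite Hb, coth_coef_odd, cot_coef_odd. ring.
      * rewrite coth_coef_odd, cot_coef_odd. ring.
Qed.

Lemma cot_coef_riccati (n : nat) :
  INR n * cot_coef n = PS_delta 2 n + PS_mult cot_coef cot_coef n - cot_coef n.
Proof.
  destruct n as [|n].
  - unfold PS_mult, PS_delta. simpl. rewrite cot_coef_0. ring.
  - set (s := (-4) ^ Nat.div2 (S n)).
    assert (Hconv : PS_mult cot_coef cot_coef (S n) =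
                    s * PS_mult coth_coef coth_coef (S n) + 2 * cot_coef (S n)).
    { unfold PS_mult.
      rewrite (sum_eq _ (fun j => coth_coef j * coth_coef (S n - j) * s
                 + (PS_delta 0 j * cot_coef (S n) + PS_delta (S n) j * cot_coef (S n)))).
      - rewrite !plus_sum, <- scal_sum, !sum_f_R0_delta by lia. ring.
      - intros j Hj. rewrite cot_coef_mul by lia. fold s. ring. }
    assert (Hric := coth_coef_riccati (S n)).
    assert (Hs : (1 + s / 4) * PS_delta 2 (S n) = 0).
    { destruct (Nat.eq_dec n 1) as [->|Hn1].
      - unfold s, PS_delta. simpl. field.
      - rewrite PS_delta_neq by lia. ring. }
    rewrite Hconv, cot_coef_S. fold s.
    replace (PS_mult coth_coef coth_coef (S n))
      with (coth_coef (S n) - INR (S n) * coth_coef (S n) + / 4 * PS_delta 2 (S n)) by lra.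
    lra.
Qed.

(* The bound propagates through (n + 1) y_n = sum_j y_j y_(n-j) for n >= 3, and
   y_2 = 1/3 <= (3/5)^2. *)
Lemma cot_coef_bounds (n : nat) : 0 <= cot_coef n <= (3 / 5) ^ n.
Proof.
  induction n as [n IH] using lt_wf_ind.
  destruct n as [|[|[|n]]].
  - rewrite cot_coef_0. simpl. lra.
  - change (cot_coef 1) with (cot_coef (2 * 0 + 1)). rewrite cot_coef_odd. simpl. lra.
  - rewrite cot_coef_2. simpl. lra.
  - set (N := S (S (S n))). set (q := 3 / 5).
    assert (Hterm : forall j, (j <= N)%nat -> 0 <= cot_coef j * cot_coef (N - j) <= q ^ N).
    { intros j Hj.
      destruct (Nat.eq_dec j 0) as [->|Hj0].
      { rewrite cot_coef_0, Rmult_0_l. split; [lra|]. apply pow_le. unfold q. lra. }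
      destruct (Nat.eq_dec j N) as [->|HjN].
      { rewrite Nat.sub_diag, cot_coef_0, Rmult_0_r. split; [lra|]. apply pow_le. unfold q. lra. }
      destruct (IH j) as [A1 A2]; [lia|]. destruct (IH (N - j)%nat) as [B1 B2]; [lia|].
      replace (q ^ N) with (q ^ j * q ^ (N - j)) by (rewrite <- pow_add; f_equal; lia).
      split; [apply Rmult_le_pos | apply Rmult_le_compat]; assumption. }
    assert (Hconv : 0 <= PS_mult cot_coef cot_coef N <= INR (S N) * q ^ N).
    { unfold PS_mult. rewrite <- (Rmult_0_r (INR (S N))), Rmult_comm, (Rmult_comm _ (q ^ N)),
        <- !sum_cte.
      split; apply sum_Rle; intros j Hj; apply Hterm; assumption. }
    assert (Hric := cot_coef_riccati N).
    rewrite PS_delta_neq in Hric by (unfold N; lia).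
    rewrite S_INR in Hconv. assert (0 <= INR N) by apply pos_INR.
    split; apply (Rmult_le_reg_l (INR N + 1)); lra.
Qed.

Lemma cot_coef_nonneg (n : nat) : 0 <= cot_coef n.
Proof. apply cot_coef_bounds. Qed.

Lemma cot_coef_even_pos (k : nat) : (1 <= k)%nat -> 0 < cot_coef (2 * k).
Proof.
  induction k as [|k IH]; intros Hk; [lia|].
  destruct (Nat.eq_dec k 0) as [->|Hk0].
  { change (2 * 1)%nat with 2%nat. rewrite cot_coef_2. lra. }
  set (N := (2 * S k)%nat).
  assert (Hric := cot_coef_riccati N).
  rewrite PS_delta_neq in Hric by (unfold N; lia).
  assert (Hterm : cot_coef 2 * cot_coef (N - 2) <= PS_mult cot_coef cot_coef N).
  { apply (sum_f_R0_ge_term (fun j => cot_coef j * cot_coef (N - j))); [|unfold N; lia].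
    intros j _. apply Rmult_le_pos; apply cot_coef_nonneg. }
  replace (N - 2)%nat with (2 * k)%nat in Hterm by (unfold N; lia).
  rewrite cot_coef_2 in Hterm.
  assert (0 < cot_coef (2 * k)) by (apply IH; lia).
  assert (0 <= INR N) by apply pos_INR.
  apply (Rmult_lt_reg_l (INR N + 1)); lra.
Qed.

Lemma CV_radius_cot_coef : Rbar_le (5 / 3) (CV_radius cot_coef).
Proof.
  replace (5 / 3) with (/ (3 / 5)) by field.
  apply (CV_radius_ge_geom _ 1); [lra|]. intros n.
  destruct (cot_coef_bounds n). rewrite Rabs_right; lra.
Qed.

(** * Identification with x cot x *)

Lemma Gronwall_zero (f f' : R -> R) (M X : R) :
  0 < X -> (forall c, 0 <= c <= X -> is_derive f c (f' c)) -> f 0 = 0 ->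
  (forall c, 0 < c < X -> f c * f' c <= M * f c ^ 2) -> f X = 0.
Proof.
  intros HX Hf Hf0 Hbound.
  set (Q t := f t ^ 2 * exp (- (2 * M) * t)).
  set (dQ t := 2 * (f t * f' t - M * f t ^ 2) * exp (- (2 * M) * t)).
  assert (HQ : forall c, 0 <= c <= X -> derivable_pt_lim Q c (dQ c)).
  { intros c Hc. apply is_derive_Reals. specialize (Hf c Hc).
    unfold Q. auto_derive; [eexists; exact Hf|]. change (fun x => f x) with f.
    rewrite (is_derive_unique _ _ _ Hf). unfold dQ. ring. }
  destruct (MVT_cor2 Q dQ 0 X HX HQ) as [c [HQX Hc]].
  assert (dQ c <= 0).
  { unfold dQ. assert (H := Hbound c Hc). assert (He := exp_pos (- (2 * M) * c)). nra. }
  assert (Q 0 = 0) by (unfold Q; rewrite Hf0; ring).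
  assert (Hsq : f X ^ 2 * exp (- (2 * M) * X) <= 0) by (fold (Q X); nra).
  assert (He := exp_pos (- (2 * M) * X)).
  assert (f X ^ 2 <= 0) by nra.
  nra.
Qed.

Lemma PSeries_le_geom (a : nat -> R) (q x : R) :
  a 0%nat = 0 -> (forall n, 0 <= a n <= q ^ n) -> 0 < q -> 0 <= x -> q * x < 1 ->
  PSeries a x <= q * x / (1 - q * x).
Proof.
  intros Ha0 Ha Hq Hx Hqx.
  assert (Hgeom : Rabs (q * x) < 1) by (rewrite Rabs_right; nra).
  assert (Htail : PSeries (PS_decr_1 a) x <= q / (1 - q * x)).
  { rewrite PSeries_eq.
    apply Rle_trans with (Series (fun n => q * (q * x) ^ n)).
    - apply Series_le.
      + intros n. unfold PS_decr_1. rewrite pow_n_pow.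
        change (scal (x ^ n) (a (S n))) with (x ^ n * a (S n)).
        destruct (Ha (S n)) as [A1 A2]. simpl in A2.
        assert (0 <= x ^ n) by (apply pow_le; lra).
        rewrite Rpow_mult_distr. split; [now apply Rmult_le_pos | nra].
      + eexists. exact (is_series_scal_l q _ _ (is_series_geom _ Hgeom)).
    - rewrite Series_scal_l, Series_geom by exact Hgeom. right. field. lra. }
  rewrite PSeries_decr_1_aux by exact Ha0.
  replace (q * x / (1 - q * x)) with (x * (q / (1 - q * x))) by (field; lra).
  now apply Rmult_le_compat_l.
Qed.

Lemma cot_riccati (x : R) :
  Rabs x < 5 / 3 ->
  x * Derive (PSeries cot_coef) x = x ^ 2 + PSeries cot_coef x ^ 2 - PSeries cot_coef x.
Proof.
  intros Hx. assert (Hr := Rabs_lt_CV_radius _ _ _ CV_radius_cot_coef Hx).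
  assert (He : ex_pseries cot_coef x) by now apply CV_radius_inside.
  assert (Hd := is_pseries_delta 2 x).
  assert (Hd' : ex_pseries (PS_delta 2) x) by (eexists; exact Hd).
  assert (Hm : ex_pseries (PS_mult cot_coef cot_coef) x) by now apply ex_pseries_mult.
  rewrite Euler_PSeries, (PSeries_ext _ _ _ cot_coef_riccati) by exact Hr.
  rewrite PSeries_Rminus, PSeries_Rplus, PSeries_mult, (is_pseries_unique _ _ _ Hd)
    by auto using ex_pseries_Rplus.
  ring.
Qed.

Lemma PI2_lt_5_3 : PI / 2 < 5 / 3.
Proof.
  destruct (Rlt_or_le (PI / 2) (5 / 3)) as [|Hge]; [assumption|exfalso].
  assert (Hcos := cos_ge_0 (5 / 3) ltac:(lra) Hge).
  destruct (cos_bound (5 / 3) 0) as [_ Hub]; [lra|lra|].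
  unfold cos_approx, cos_term in Hub. simpl in Hub. lra.
Qed.

Lemma cot_series_eq (x : R) :
  0 < x < 5 / 3 -> (1 - PSeries cot_coef x) * sin x = x * cos x.
Proof.
  intros Hx.
  set (Y := PSeries cot_coef).
  (* The defect f satisfies x f' = Y f, f(0) = 0, and Y(c) <= M c on (0, x). *)
  set (f t := (1 - Y t) * sin t - t * cos t).
  set (f' t := - Derive Y t * sin t + (1 - Y t) * cos t - cos t + t * sin t).
  set (q := 3 / 5). set (M := q / (1 - q * x)).
  assert (HY : forall c, Rabs c < 5 / 3 -> is_derive Y c (Derive Y c)).
  { intros c Hc. apply Derive_correct, ex_derive_PSeries.
    now apply (Rabs_lt_CV_radius _ (5 / 3)); [apply CV_radius_cot_coef|]. }
  enough (f x = 0) by (unfold f in *; lra).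
  apply (Gronwall_zero f f' M x); [lra | | |].
  - intros c Hc. specialize (HY c ltac:(rewrite Rabs_right; lra)).
    unfold f. auto_derive; [eexists; exact HY|].
    change (fun t => Y t) with Y. unfold f'. ring.
  - unfold f. rewrite sin_0. ring.
  - intros c Hc.
    assert (Hode := cot_riccati c ltac:(rewrite Rabs_right; lra)). fold Y in Hode.
    assert (Hxf' : c * f' c = Y c * f c).
    { unfold f, f'.
      replace (c * (- Derive Y c * sin c + (1 - Y c) * cos c - cos c + c * sin c))
        with (- (c * Derive Y c) * sin c + c * ((1 - Y c) * cos c - cos c + c * sin c))
        by ring.
      rewrite Hode. ring. }
    assert (HYc : Y c <= M * c).
    { apply Rle_trans with (q * c / (1 - q * c)).
      - apply PSeries_le_geom; [apply cot_coef_0 | apply cot_coef_bounds | | |];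
          unfold q; lra.
      - unfold M, Rdiv. rewrite Rmult_assoc, (Rmult_comm c), <- Rmult_assoc.
        apply Rmult_le_compat_r; [lra|]. apply Rmult_le_compat_l; [unfold q; lra|].
        apply Rinv_le_contravar; unfold q; nra. }
    apply (Rmult_le_reg_l c); [lra|].
    replace (c * (f c * f' c)) with (f c ^ 2 * Y c)
      by (transitivity (f c * (c * f' c)); [rewrite Hxf'|]; ring).
    replace (c * (M * f c ^ 2)) with (f c ^ 2 * (M * c)) by ring.
    apply Rmult_le_compat_l; [apply pow2_ge_0 | exact HYc].
Qed.

(** * Comparison of power series with nonnegative coefficients *)

Lemma PSeries_Series (a : nat -> R) (x : R) : PSeries a x = Series (fun n => a n * x ^ n).
Proof.
  rewrite PSeries_eq. apply Series_ext. intros n. rewrite pow_n_pow. apply Rmult_comm.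
Qed.

Lemma ex_pseries_Series (a : nat -> R) (x : R) :
  ex_pseries a x -> ex_series (fun n => a n * x ^ n).
Proof.
  apply ex_series_ext. intros n. rewrite pow_n_pow. apply Rmult_comm.
Qed.

Lemma Series_ge_term (v : nat -> R) (k : nat) :
  ex_series v -> (forall n, 0 <= v n) -> v k <= Series v.
Proof.
  intros Hv Hpos. rewrite <- (is_series_unique _ _ (is_series_delta k v)).
  apply Series_le; [|exact Hv]. intros n. unfold PS_delta.
  destruct (Nat.eqb n k); specialize (Hpos n); lra.
Qed.

Lemma sum_lt_Series (w : nat -> R) (N k : nat) :
  ex_series w -> (forall n, (N < n)%nat -> 0 <= w n) -> (N < k)%nat -> 0 < w k ->
  sum_f_R0 w N < Series w.
Proof.
  intros Hw Hpos HNk Hk.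
  rewrite (Series_incr_n w (S N)) by (lia || exact Hw). simpl pred.
  assert (w (S N + (k - S N))%nat <= Series (fun j => w (S N + j)%nat)).
  { apply (Series_ge_term (fun j => w (S N + j)%nat)); [now apply ex_series_incr_n|].
    intros j. apply (Hpos (S N + j)%nat). lia. }
  replace (S N + (k - S N))%nat with k in * by lia. lra.
Qed.

Lemma PSeries_gt_partial_sum (a : nat -> R) (x : R) (N k : nat) :
  (forall n, 0 <= a n) -> 0 < x -> ex_pseries a x -> (N < k)%nat -> 0 < a k ->
  sum_f_R0 (fun n => a n * x ^ n) N < PSeries a x.
Proof.
  intros Ha Hx Hex HNk Hk. rewrite PSeries_Series.
  apply (sum_lt_Series _ N k); [now apply ex_pseries_Series | | exact HNk |].
  - intros n _. apply Rmult_le_pos; [apply Ha | apply pow_le; lra].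
  - apply Rmult_lt_0_compat; [exact Hk | apply pow_lt; lra].
Qed.

Lemma PSeries_tail_lt_scaled (a : nat -> R) (x X : R) (N k : nat) :
  (forall n, 0 <= a n) -> 0 < x < X -> ex_pseries a x -> ex_pseries a X ->
  (S N < k)%nat -> 0 < a k ->
  PSeries a x - sum_f_R0 (fun n => a n * x ^ n) N
  < (x / X) ^ S N * (PSeries a X - sum_f_R0 (fun n => a n * X ^ n) N).
Proof.
  intros Ha Hx Hex HeX HNk Hk.
  set (z := x / X).
  assert (Hz : 0 < z < 1).
  { unfold z. split; [apply Rdiv_lt_0_compat; lra|].
    apply (Rmult_lt_reg_r X); [lra|]. field_simplify; lra. }
  set (w n := a n * X ^ n * z ^ S N - a n * x ^ n).
  assert (Hw : forall n, (S N <= n)%nat -> w n = a n * X ^ n * z ^ S N * (1 - z ^ (n - S N))).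
  { intros n Hn. unfold w.
    replace x with (z * X) by (unfold z; field; lra).
    rewrite Rpow_mult_distr.
    replace (z ^ n) with (z ^ S N * z ^ (n - S N)) by (rewrite <- pow_add; f_equal; lia).
    ring. }
  assert (HaX : forall n, 0 <= a n * X ^ n)
    by (intros n; apply Rmult_le_pos; [apply Ha | apply pow_le; lra]).
  assert (HsX : ex_series (fun n => a n * X ^ n * z ^ S N)).
  { apply (ex_series_ext (fun n => scal (z ^ S N) (a n * X ^ n))); [intros; apply Rmult_comm|].
    apply (@ex_series_scal_l R_AbsRing R_NormedModule). now apply ex_pseries_Series. }
  assert (Hsx := ex_pseries_Series _ _ Hex).
  assert (Hlt : sum_f_R0 w N < Series w).
  { apply (sum_lt_Series _ N k).
    - apply (ex_series_ext (fun n => plus (a n * X ^ n * z ^ S N) (opp (a n * x ^ n))));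
        [reflexivity|].
      now apply (@ex_series_minus R_AbsRing R_NormedModule).
    - intros n Hn. rewrite Hw by lia.
      assert (z ^ (n - S N) <= 1) by (rewrite <- (pow1 (n - S N)); apply pow_incr; lra).
      apply Rmult_le_pos; [apply Rmult_le_pos; [apply HaX | apply pow_le; lra] | lra].
    - lia.
    - rewrite Hw by lia.
      assert (z ^ (k - S N) < 1) by (apply pow_lt_1_compat; [lra | lia]).
      apply Rmult_lt_0_compat; [apply Rmult_lt_0_compat; [|apply pow_lt; lra] | lra].
      apply Rmult_lt_0_compat; [exact Hk | apply pow_lt; lra]. }
  unfold w in Hlt.
  rewrite Series_minus, Series_scal_r, minus_sum, <- scal_sum in Hlt by assumption.
  rewrite !PSeries_Series. lra.
Qed.

(** * The series of (x / sin x)^2 + x / tan x *)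

(* Taylor coefficients of x Y' - 2 Y, with Y = 1 - x cot x. *)
Definition csc2_cot_coef (n : nat) : R := (INR n - 2) * cot_coef n.

Lemma csc2_cot_coef_nonneg (n : nat) : 0 <= csc2_cot_coef n.
Proof.
  unfold csc2_cot_coef. destruct n as [|[|[|n]]].
  - rewrite cot_coef_0. lra.
  - change (cot_coef 1) with (cot_coef (2 * 0 + 1)). rewrite cot_coef_odd. lra.
  - simpl. lra.
  - apply Rmult_le_pos; [|apply cot_coef_nonneg].
    rewrite !S_INR. assert (0 <= INR n) by apply pos_INR. lra.
Qed.

Lemma csc2_cot_coef_odd (k : nat) : csc2_cot_coef (2 * k + 1) = 0.
Proof. unfold csc2_cot_coef. rewrite cot_coef_odd. ring. Qed.

Lemma csc2_cot_coef_even_pos (k : nat) : (2 <= k)%nat -> 0 < csc2_cot_coef (2 * k).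
Proof.
  intros Hk. unfold csc2_cot_coef.
  apply Rmult_lt_0_compat; [|apply cot_coef_even_pos; lia].
  rewrite mult_INR. assert (2 <= INR k) by (apply (le_INR 2); lia). simpl. lra.
Qed.

Lemma a_coef_csc2_cot (k : nat) : a_coef k = csc2_cot_coef (2 * k).
Proof.
  unfold a_coef, csc2_cot_coef. destruct k as [|k].
  - simpl. rewrite cot_coef_0. field.
  - assert (Hy : cot_coef (2 * S k) =
                 4 ^ S k * Rabs (bernoulli (2 * S k)) / INR (fact (2 * S k))).
    { rewrite <- (Rabs_pos_eq (cot_coef _)) by apply cot_coef_nonneg.
      rewrite cot_coef_even by lia. unfold bern_coef.
      rewrite Rabs_mult, Rabs_Ropp, <- RPow_abs, Rabs_div by apply INR_fact_neq_0.
      rewrite (Rabs_pos_eq (INR _)) by apply pos_INR.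
      replace (Rabs (-4)) with 4 by (rewrite Rabs_left; lra).
      field. apply INR_fact_neq_0. }
    rewrite Hy, minus_INR by lia. simpl (INR 2). field. apply INR_fact_neq_0.
Qed.

Lemma ex_pseries_csc2_cot_coef (x : R) : Rabs x < 5 / 3 -> ex_pseries csc2_cot_coef x.
Proof.
  intros Hx. assert (Hr := Rabs_lt_CV_radius _ _ _ CV_radius_cot_coef Hx).
  apply (ex_pseries_ext (fun n => INR n * cot_coef n - 2 * cot_coef n));
    [intros n; symmetry; apply Rmult_minus_distr_r|].
  apply ex_pseries_Rminus.
  - apply CV_radius_inside. now rewrite CV_radius_Euler.
  - apply (ex_pseries_ext (PS_scal 2 cot_coef)); [reflexivity|].
    apply ex_pseries_scal; [apply Rmult_comm | now apply CV_radius_inside].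
Qed.

Lemma PSeries_csc2_cot_coef (x : R) :
  Rabs x < 5 / 3 ->
  PSeries csc2_cot_coef x = x * Derive (PSeries cot_coef) x - 2 * PSeries cot_coef x.
Proof.
  intros Hx. assert (Hr := Rabs_lt_CV_radius _ _ _ CV_radius_cot_coef Hx).
  rewrite Euler_PSeries by exact Hr.
  rewrite <- PSeries_scal, <- PSeries_Rminus.
  - apply PSeries_ext. intros n. unfold csc2_cot_coef, PS_scal.
    change (scal 2 (cot_coef n)) with (2 * cot_coef n). ring.
  - apply CV_radius_inside. now rewrite CV_radius_Euler.
  - apply ex_pseries_scal; [apply Rmult_comm | now apply CV_radius_inside].
Qed.

Lemma csc2_cot_series (x : R) :
  0 < x < PI / 2 -> (x / sin x) ^ 2 + x / tan x = 2 + PSeries csc2_cot_coef x.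
Proof.
  intros Hx. assert (Hpi := PI2_lt_5_3).
  assert (Hs : 0 < sin x) by (apply sin_gt_0; lra).
  assert (Hc : 0 < cos x) by (apply cos_gt_0; lra).
  assert (Hxa : Rabs x < 5 / 3) by (rewrite Rabs_right; lra).
  assert (Hcot := cot_series_eq x ltac:(lra)).
  assert (Hode := cot_riccati x Hxa).
  set (Y := PSeries cot_coef x) in *.
  assert (Htan : x / tan x = 1 - Y).
  { unfold tan. apply (Rmult_eq_reg_r (sin x)); [|lra]. rewrite Hcot. field. lra. }
  assert (Hsin : (x / sin x) ^ 2 = x ^ 2 + (1 - Y) ^ 2).
  { assert (Hpy := sin2_cos2 x). unfold Rsqr in Hpy.
    apply (Rmult_eq_reg_r (sin x ^ 2)); [|nra].
    replace ((x ^ 2 + (1 - Y) ^ 2) * sin x ^ 2) with (x ^ 2 * sin x ^ 2 + ((1 - Y) * sin x) ^ 2)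
      by ring.
    rewrite Hcot. field_simplify; [|lra].
    transitivity (x ^ 2 * (sin x * sin x + cos x * cos x)); [rewrite Hpy|]; ring. }
  rewrite PSeries_csc2_cot_coef, Htan, Hsin, Hode by exact Hxa. fold Y. ring.
Qed.

Lemma PSeries_csc2_cot_coef_PI2 : PSeries csc2_cot_coef (PI / 2) = PI ^ 2 / 4 - 2.
Proof.
  assert (Hpi := PI2_lt_5_3). assert (Hpos := PI_RGT_0).
  assert (Hxa : Rabs (PI / 2) < 5 / 3) by (rewrite Rabs_right; lra).
  assert (Hcot := cot_series_eq (PI / 2) ltac:(lra)).
  rewrite sin_PI2, cos_PI2 in Hcot.
  rewrite PSeries_csc2_cot_coef, cot_riccati by exact Hxa.
  replace (PSeries cot_coef (PI / 2)) with 1 by lra. field.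
Qed.

Lemma sum_from2_csc2_cot (y : R) (m : nat) :
  (1 <= m)%nat ->
  sum_from2 m (fun k => a_coef k * y ^ (2 * k)) =
  sum_f_R0 (fun n => csc2_cot_coef n * y ^ n) (2 * m + 1).
Proof.
  intros Hm.
  rewrite sum_from2_eq_sum by (exact Hm || (unfold a_coef; simpl; field)).
  rewrite <- sum_f_R0_even by (intros k; rewrite csc2_cot_coef_odd; ring).
  apply sum_eq. intros k _. now rewrite a_coef_csc2_cot.
Qed.

Theorem theorem5 (x : R) (m : nat) :
  0 < x < PI / 2 -> (2 <= m)%nat ->
  2 + sum_from2 (m - 1) (fun k => a_coef k * x ^ (2 * k))
    + (2 * x / PI) ^ (2 * m)
      * (PI ^ 2 / 4 - 2 - sum_from2 (m - 1) (fun k => a_coef k * (PI / 2) ^ (2 * k)))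
  > (x / sin x) ^ 2 + x / tan x
  /\
  (x / sin x) ^ 2 + x / tan x
  > 2 + sum_from2 m (fun k => a_coef k * x ^ (2 * k)).
Proof.
  intros Hx Hm. assert (Hpi := PI2_lt_5_3). assert (HPI := PI_RGT_0).
  assert (Hex : forall y, 0 <= y <= PI / 2 -> ex_pseries csc2_cot_coef y)
    by (intros y Hy; apply ex_pseries_csc2_cot_coef; rewrite Rabs_right; lra).
  assert (Hpos : 0 < csc2_cot_coef (2 * S m)) by (apply csc2_cot_coef_even_pos; lia).
  rewrite csc2_cot_series, !sum_from2_csc2_cot, <- PSeries_csc2_cot_coef_PI2 by (lra || lia).
  split.
  - replace (2 * x / PI) with (x / (PI / 2)) by (field; lra).
    replace (2 * m)%nat with (S (2 * (m - 1) + 1)) by lia.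
    assert (H := PSeries_tail_lt_scaled csc2_cot_coef x (PI / 2) (2 * (m - 1) + 1) (2 * S m)
                   csc2_cot_coef_nonneg Hx (Hex x ltac:(lra)) (Hex (PI / 2) ltac:(lra))
                   ltac:(lia) Hpos).
    lra.
  - assert (H := PSeries_gt_partial_sum csc2_cot_coef x (2 * m + 1) (2 * S m)
                   csc2_cot_coef_nonneg (proj1 Hx) (Hex x ltac:(lra)) ltac:(lia) Hpos).
    lra.
Qed.
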